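(* Let $M=(\alpha_{i,j})$ be a Griffiths positive $k\times k$ matrix of constant coefficient $(1,1)$-forms on $\mathbb{C}^n$ ($k\geqslant 2$) such that $\alpha_{1,1}=\omega:=\sum_{l=1}^n\frac{\sqrt{-1}}{2}dz_l\wedge d\overline{z_l}$ in complex linear coordinates $(z_1,\dots,z_n)$. Then there is $C\in GL_k(\mathbb{C})$ such that \[ C\cdot M\cdot C^H= \begin{pmatrix} \omega & \rho_{1,2} & \cdots & \rho_{1,k}\\ \overline{\rho_{1,2}} & \omega+\rho_{2,2} & \cdots & \rho_{2,k}\\ \vdots & \vdots & \ddots & \vdots\\ \overline{\rho_{1,k}} & \overline{\rho_{2,k}} & \cdots & \omega+\rho_{k,k} \end{pmatrix} \] with all $\rho_{i,j}\in P^{1,1}$. Moreover, one may in addition choose (after a change of complex linear coordinates in which $\omega$ keeps the form $\sum_l\frac{\sqrt{-1}}{2}dz_l\wedge d\overline{z_l}$) that $\rho_{2,2}=\sum_{l=1}^n b_{2,2}^{(l)}\frac{\sqrt{-1}}{2}dz_l\wedge d\overline{z_l}$ with $\sum_{l=1}^n b_{2,2}^{(l)}=0$ and $b_{2,2}^{(l)}>-1$ for each $1\leqslant l\leqslant n$.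
   Context: $V^{1,1}$ denotes the space of constant coefficient $(1,1)$-forms on $\mathbb{C}^n$. A $(1,1)$-form is Kähler if it equals $\sum_l\frac{\sqrt{-1}}{2}dw_l\wedge d\overline{w_l}$ in some complex linear coordinates. A $k\times k$ matrix $M=(\alpha_{i,j})$ of $(1,1)$-forms with $\alpha_{i,j}=\overline{\alpha_{j,i}}$ is Griffiths positive if $\sum_{i,j}\theta_i\alpha_{i,j}\overline{\theta_j}$ is Kähler for all $\theta\in\mathbb{C}^k\setminus\{0\}$. For $C=(c_{i,j})\in GL_k(\mathbb{C})$, $C\cdot M\cdot C^H$ is the matrix with entries $\sum_{a,b}c_{i,a}\alpha_{a,b}\overline{c_{j,b}}$. The primitive space is $P^{1,1}=\{\alpha\in V^{1,1}:\alpha\wedge\omega^{n-1}=0\}$. *)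

From HB Require Import structures.
From mathcomp Require Import all_boot all_order all_algebra.
From mathcomp Require Import complex.
From mathcomp Require Import reals.
Set Implicit Arguments. Unset Strict Implicit. Unset Printing Implicit Defensive.
Import Order.TTheory GRing.Theory Num.Theory.
Local Open Scope ring_scope.
Local Open Scope complex_scope.

(* A constant coefficient (1,1)-form on C^n, in the fixed complex linear
   coordinates (z_1,...,z_n),
       alpha = sum_{p,q} A p q * (sqrt(-1)/2) dz_p /\ d(conj z_q),
   is represented by its coefficient matrix A : 'M[R[i]]_n.  *)
Definition form11 (R : realType) (n : nat) := 'M[R[i]]_n.

Definition omega_form (R : realType) (n : nat) : form11 R n := 1%:M.

(* Complex conjugate of a (1,1)-form:
   conj(A_pq (i/2) dz_p/\dzbar_q) = conj(A_pq) (i/2) dz_q/\dzbar_p,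
   so the coefficient matrix becomes the conjugate transpose. *)
Definition form_conj (R : realType) (n : nat) (A : form11 R n) : form11 R n :=
  (map_mx (fun x => x^*) A)^T.

(* A change of complex linear coordinates w = P z (P invertible) gives
   dw_l = sum_p P l p dz_p, hence
   sum_l (i/2) dw_l /\ d(conj w_l) has coefficient matrix P^T * conj(P)
   in the z-coordinates.  [diag_in_coords P b] is the coefficient matrix (in
   z-coordinates) of  sum_l b_l (i/2) dw_l /\ d(conj w_l). *)
Definition diag_in_coords (R : realType) (n : nat) (P : 'M[R[i]]_n)
  (b : 'I_n -> R[i]) : form11 R n :=
  P^T *m diag_mx (\row_l b l) *m map_mx (fun x => x^*) P.

Definition is_kahler (R : realType) (n : nat) (A : form11 R n) : Prop :=
  exists P : 'M[R[i]]_n, P \in unitmx /\ A = diag_in_coords P (fun _ => 1).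

Definition formmx (R : realType) (n k : nat) := 'I_k -> 'I_k -> form11 R n.

Definition is_hermitian_formmx (R : realType) (n k : nat) (M : formmx R n k)
  : Prop := forall i j, M i j = form_conj (M j i).

Definition formmx_eval (R : realType) (n k : nat) (M : formmx R n k)
  (theta : 'I_k -> R[i]) : form11 R n :=
  \sum_(i < k) \sum_(j < k) (theta i * (theta j)^*) *: M i j.

Definition griffiths_positive (R : realType) (n k : nat) (M : formmx R n k)
  : Prop :=
  is_hermitian_formmx M /\
  forall theta : 'I_k -> R[i], (exists i, theta i != 0) ->
    is_kahler (formmx_eval M theta).

Definition congr_formmx (R : realType) (n k : nat) (C : 'M[R[i]]_k)
  (M : formmx R n k) : formmx R n k :=
  fun i j => \sum_(a < k) \sum_(b < k) (C i a * (C j b)^*) *: M a b.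

(* Top-degree coefficient of alpha /\ omega^(n-1) with respect to
   prod_l (i/2) dz_l /\ d(conj z_l): since (1,1)-forms commute and
   omega^(n-1) = (n-1)! sum_l prod_{m <> l} (i/2)dz_m/\dzbar_m, this is
   (n-1)! * sum_l A l l.  For n = 0 the wedge is the zero form. *)
Definition wedge_omega_top (R : realType) (n : nat) (A : form11 R n) : R[i] :=
  (n.-1)`!%:R * \tr A.

Definition is_primitive (R : realType) (n : nat) (A : form11 R n) : Prop :=
  wedge_omega_top A = 0.

From HB Require Import structures.
From mathcomp Require Import all_boot all_order all_algebra.
From mathcomp Require Import complex.
From mathcomp Require Import reals.
From mathcomp Require Import spectral ring.
Import Order.TTheory GRing.Theory Num.Theory.

(* Taking traces (the coefficient of alpha /\ omega^(n-1), up to (n-1)!)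
   turns M into the Hermitian matrix T = (tr alpha_ij / n), which is positive
   definite because Griffiths positivity makes every theta M theta^H Kaehler,
   hence of positive trace.  If C T C^H = 1 and the first row of C is a
   multiple of e_1 (take the inverse of a square root of T rotated by
   Gram-Schmidt), every entry of C M C^H has trace n delta_ij, so it differs
   from delta_ij omega by a primitive form, and the (1,1) entry is still omega.
   Finally a unitary change of coordinates diagonalizes the Kaehler form
   (C M C^H)_22 together with omega; its eigenvalues d_l are positive and sum
   to n, so b_l = d_l - 1 works. *)

Set Implicit Arguments. Unset Strict Implicit. Unset Printing Implicit Defensive.
Local Open Scope ring_scope.

Section PositiveDefinite.
Local Open Scope sesquilinear_scope.
Context {K : numClosedFieldType}.

Definition posdefmx n (A : 'M[K]_n) :=
  forall u : 'rV_n, u != 0 -> 0 < (u *m A *m u^t*) 0 0.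

Lemma mulmx_tC_entry m p q r (A : 'M[K]_(m, p)) (B : 'M_(p, q)) (D : 'M_(r, q))
    i j :
  (A *m B *m D^t*) i j = \sum_a \sum_b A i a * B a b * (D j b)^*.
Proof.
rewrite !mxE; under eq_bigr => b _ do rewrite !mxE mulr_suml.
by rewrite exchange_big.
Qed.

Lemma delta_mx_neq0 m n (i : 'I_m) (j : 'I_n) : delta_mx i j != 0 :> 'M[K]_(m, n).
Proof. by apply/eqP => /matrixP/(_ i j)/eqP; rewrite !mxE !eqxx oner_eq0. Qed.

Lemma rV_neq0_coef n (u : 'rV[K]_n) : u != 0 -> exists j, u 0 j != 0.
Proof.
move=> u0; apply/existsP; apply: contraR u0 => /existsPn u0.
by apply/eqP/rowP => j; move: (u0 j); rewrite negbK mxE => /eqP.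
Qed.

Lemma row_unitmx_neq0 n (P : 'M[K]_n) i : P \in unitmx -> row i P != 0.
Proof.
by move=> Pu; rewrite rowE mulmx_free_eq0 ?row_free_unit // delta_mx_neq0.
Qed.

Lemma posdefmx1 n : posdefmx (1%:M : 'M[K]_n).
Proof. by move=> u u0; rewrite mulmx1 -dotmxE dnorm_gt0. Qed.

Lemma posdefmx_congr n (Q A : 'M[K]_n) :
  Q \in unitmx -> posdefmx A -> posdefmx (Q *m A *m Q^t*).
Proof.
move=> Qu pA u u0; have -> : u *m (Q *m A *m Q^t*) *m u^t* =
    (u *m Q) *m A *m (u *m Q)^t* by rewrite trmx_mul map_mxM !mulmxA.
by apply: pA; rewrite mulmx_free_eq0 ?row_free_unit.
Qed.

Lemma posdefmxZ n (a : K) (A : 'M[K]_n) :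
  0 < a -> posdefmx A -> posdefmx (a *: A).
Proof. by move=> a0 pA u u0; rewrite -scalemxAr -scalemxAl mxE mulr_gt0 ?pA. Qed.

Lemma posdefmx_diag_gt0 n (A : 'M[K]_n) j : posdefmx A -> 0 < A j j.
Proof.
move=> /(_ _ (delta_mx_neq0 0 j)).
by rewrite trmx_delta map_delta_mx -rowE -colE !mxE.
Qed.

Lemma posdefmx_tr_gt0 n (A : 'M[K]_n) : (0 < n)%N -> posdefmx A -> 0 < \tr A.
Proof.
move=> n0 pA; rewrite /mxtrace (bigD1 (Ordinal n0)) //=.
rewrite ltr_wpDr ?posdefmx_diag_gt0 //.
by apply: sumr_ge0 => l _; apply/ltW/posdefmx_diag_gt0.
Qed.

Lemma unitary_tCmul n (P : 'M[K]_n) : P \is unitarymx -> P^t* *m P = 1%:M.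
Proof. by rewrite -trmxC_unitary => /unitarymxP; rewrite trmxCK. Qed.

Lemma hermitian_posdefmx_spectral n (A : 'M[K]_n) : A^t* = A -> posdefmx A ->
  exists P (d : 'rV_n),
    [/\ P \is unitarymx, A = P^t* *m diag_mx d *m P & forall j, 0 < d 0 j].
Proof.
move=> hA pA; have PU := spectral_unitarymx A.
have /orthomx_spectralP : A \is normalmx by apply/normalmxP; rewrite hA.
rewrite invmx_unitary //; set P := spectralmx A; set d := spectral_diag A => eA.
exists P, d; split => // j.
have -> : d 0 j = (P *m A *m P^t*) j j.
  by rewrite eA !mulmxA (unitarymxP PU) mul1mx mulmxtVK // mxE eqxx mulr1n.
exact/posdefmx_diag_gt0/posdefmx_congr/pA/unitarymx_unit.
Qed.

Lemma hermitian_posdefmx_factor n (A : 'M[K]_n) : A^t* = A -> posdefmx A ->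
  exists2 Y, Y \in unitmx & Y *m Y^t* = A.
Proof.
move=> hA /(hermitian_posdefmx_spectral hA) [P [d [PU -> dpos]]].
pose s := \row_j sqrtC (d 0 j).
have sC : (diag_mx s)^t* = diag_mx s.
  rewrite tr_diag_mx map_diag_mx; congr diag_mx; apply/rowP => j.
  by rewrite !mxE /= geC0_conj // sqrtC_ge0 ltW.
exists (P^t* *m diag_mx s).
  rewrite unitmx_mul unitarymx_unit ?trmxC_unitary //= unitmxE det_diag unitfE.
  by apply/prodf_neq0 => j _; rewrite mxE sqrtC_eq0 gt_eqF.
have ss : diag_mx s *m diag_mx s = diag_mx d.
  by rewrite mulmx_diag; congr diag_mx; apply/rowP => j; rewrite !mxE -expr2 sqrtCK.
by rewrite -ss trmx_mul map_mxM trmxCK sC !mulmxA.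
Qed.

Lemma unitmx_gram_first_row n (Y : 'M[K]_n) (i0 : 'I_n) :
  val i0 = 0%N -> Y \in unitmx ->
  exists X, [/\ X \in unitmx, X *m X^t* = Y *m Y^t* &
                exists c, row i0 X = c *: delta_mx 0 i0].
Proof.
move=> hi0 Yu; pose S := schmidt Y.
have SU : S \is unitarymx by apply: schmidt_unitarymx.
have [c hc] : exists c, row i0 Y = c *: row i0 S.
  apply/sub_rVP; have := row_schmidt_sub Y i0.
  rewrite (big_pred1 i0) ?genmxE // => a /=.
  by rewrite hi0 leqn0 -[a == i0](inj_eq val_inj) hi0.
exists (Y *m S^t*); split.
- by rewrite unitmx_mul Yu unitarymx_unit ?trmxC_unitary.
- by rewrite trmx_mul map_mxM trmxCK mulmxA mulmxKtV.
- exists c; by rewrite row_mul hc -scalemxAl -row_mul (unitarymxP SU) row1.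
Qed.

Lemma hermitian_posdefmx_congr1 n (A : 'M[K]_n) (i0 : 'I_n) :
  val i0 = 0%N -> A^t* = A -> posdefmx A ->
  exists C, [/\ C \in unitmx, C *m A *m C^t* = 1%:M &
                forall a, a != i0 -> C i0 a = 0].
Proof.
move=> hi0 hA pA; have [Y Yu YY] := hermitian_posdefmx_factor hA pA.
have [X [Xu XX [c hc]]] := unitmx_gram_first_row hi0 Yu.
exists (invmx X); split.
- by rewrite unitmx_inv.
- rewrite -YY -XX !mulmxA mulVmx // mul1mx -map_mxM -trmx_mul mulVmx //.
  by rewrite trmx1 map_mx1.
have hrow : c *: row i0 (invmx X) = delta_mx 0 i0.
  by rewrite rowE scalemxAl -hc -row_mul mulmxV // row1.
have c0 : c != 0.
  apply/eqP => c0; move/eqP: (delta_mx_neq0 (0 : 'I_1) i0).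
  by rewrite -hrow c0 scale0r.
move=> a ha; have /matrixP/(_ 0 a)/eqP := hrow.
by rewrite !mxE (negbTE ha) mulf_eq0 (negbTE c0) => /eqP.
Qed.

End PositiveDefinite.

Section FormMatrices.
Local Open Scope sesquilinear_scope.
Variable R : realType.

Lemma form_conjE n (A : form11 R n) : form_conj A = A^t*.
Proof. by apply/matrixP => a b; rewrite !mxE. Qed.

Lemma diag_in_coordsE n (P : 'M[R[i]]_n) g :
  diag_in_coords P g = P^T *m diag_mx (\row_l g l) *m (P^T)^t*.
Proof. by congr (_ *m _); apply/matrixP => a b; rewrite !mxE. Qed.

Lemma diag_in_coords1 n (P : 'M[R[i]]_n) :
  diag_in_coords P (fun _ => 1) = P^T *m (P^T)^t*.
Proof.
rewrite diag_in_coordsE; congr (_ *m _).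
by rewrite -[RHS]mulmx1; congr (_ *m _); apply/matrixP => a b; rewrite !mxE.
Qed.

Lemma kahler_posdefmx n (A : form11 R n) : is_kahler A -> posdefmx A.
Proof.
case=> P [Pu ->]; rewrite diag_in_coords1.
have PTu : P^T \in unitmx by rewrite unitmx_tr.
by have := posdefmx_congr PTu (@posdefmx1 _ n); rewrite !mulmx1.
Qed.

Lemma kahler_hermitian n (A : form11 R n) : is_kahler A -> A^t* = A.
Proof. by case=> P [_ ->]; rewrite diag_in_coords1 trmx_mul map_mxM trmxCK. Qed.

Lemma eq_diag_in_coords n (P : 'M[R[i]]_n) f g :
  f =1 g -> diag_in_coords P f = diag_in_coords P g.
Proof.
move=> fg; rewrite !diag_in_coordsE; congr (_ *m diag_mx _ *m _).
by apply/rowP => l; rewrite !mxE fg.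
Qed.

Lemma diag_in_coordsB n (P : 'M[R[i]]_n) f g :
  diag_in_coords P f - diag_in_coords P g = diag_in_coords P (fun l => f l - g l).
Proof.
rewrite !diag_in_coordsE -mulmxBl -mulmxBr -linearB /=.
by congr (_ *m diag_mx _ *m _); apply/rowP => l; rewrite !mxE.
Qed.

Lemma mxtrace_diag_in_coords n (P : 'M[R[i]]_n) g :
  omega_form R n = diag_in_coords P (fun _ => 1) ->
  \tr (diag_in_coords P g) = \sum_l g l.
Proof.
rewrite /omega_form diag_in_coords1 diag_in_coordsE => /esym/mulmx1C PP.
rewrite mxtrace_mulC mulmxA PP mul1mx mxtrace_diag.
by apply: eq_bigr => l; rewrite mxE.
Qed.

Definition tracemx n k (M : formmx R n k) : 'M[R[i]]_k :=
  \matrix_(a, b) \tr (M a b).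

Lemma tr_sesqui_sum n k (M : formmx R n k) (x y : 'I_k -> R[i]) :
  \tr (\sum_a \sum_b (x a * (y b)^*) *: M a b) =
  \sum_a \sum_b x a * tracemx M a b * (y b)^*.
Proof.
rewrite raddf_sum; apply: eq_bigr => a _.
rewrite raddf_sum; apply: eq_bigr => b _ /=; rewrite mxtraceZ mxE; ring.
Qed.

Lemma tr_congr_formmx n k (C : 'M[R[i]]_k) (M : formmx R n k) i j :
  \tr (congr_formmx C M i j) = (C *m tracemx M *m C^t*) i j.
Proof. by rewrite mulmx_tC_entry tr_sesqui_sum. Qed.

Lemma tr_formmx_eval n k (M : formmx R n k) (u : 'rV_k) :
  \tr (formmx_eval M (fun a => u 0 a)) = (u *m tracemx M *m u^t*) 0 0.
Proof. by rewrite mulmx_tC_entry tr_sesqui_sum. Qed.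

Lemma congr_formmx_hermitian n k (C : 'M[R[i]]_k) (M : formmx R n k) :
  is_hermitian_formmx M -> is_hermitian_formmx (congr_formmx C M).
Proof.
move=> hM i j; apply/matrixP => x y.
rewrite /form_conj /congr_formmx !mxE !summxE rmorph_sum.
under eq_bigr => a _ do rewrite summxE.
under [RHS]eq_bigr => a _ do rewrite summxE rmorph_sum.
rewrite [RHS]exchange_big; apply: eq_bigr => a _; apply: eq_bigr => b _.
by rewrite [M a b]hM !mxE !rmorphM /= conjcK; ring.
Qed.

Lemma tracemx_hermitian n k (M : formmx R n k) :
  is_hermitian_formmx M -> (tracemx M)^t* = tracemx M.
Proof.
move=> hM; apply/matrixP => a b; rewrite !mxE [M a b]hM form_conjE /mxtrace.
by rewrite rmorph_sum; apply: eq_bigr => l _; rewrite !mxE.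
Qed.

Lemma griffiths_tracemx_posdefmx n k (M : formmx R n k) :
  (0 < n)%N -> griffiths_positive M -> posdefmx (tracemx M).
Proof.
move=> n0 [_ hpos] u /rV_neq0_coef u0; rewrite -tr_formmx_eval.
exact/posdefmx_tr_gt0/kahler_posdefmx/hpos.
Qed.

Lemma congr_formmx_diag n k (C : 'M[R[i]]_k) (M : formmx R n k) i :
  congr_formmx C M i i = formmx_eval M (fun a => C i a).
Proof. by []. Qed.

Lemma griffiths_congr_kahler n k (C : 'M[R[i]]_k) (M : formmx R n k) i :
  C \in unitmx -> griffiths_positive M -> is_kahler (congr_formmx C M i i).
Proof.
move=> Cu [_ hpos]; apply: hpos.
by have [a] := rV_neq0_coef (row_unitmx_neq0 i Cu); rewrite mxE; exists a.
Qed.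

Lemma formmx_eval_delta n k (M : formmx R n k) (th : 'I_k -> R[i]) i0 :
  (forall a, a != i0 -> th a = 0) ->
  formmx_eval M th = (th i0 * (th i0)^*) *: M i0 i0.
Proof.
move=> th0; rewrite /formmx_eval (bigD1 i0) //=.
rewrite [X in _ + X]big1 => [|a ha]; last first.
  by apply: big1 => b _; rewrite th0 // mul0r scale0r.
rewrite addr0 (bigD1 i0) //= [X in _ + X]big1 ?addr0 // => b hb.
by rewrite (th0 b hb) conjC0 mulr0 scale0r.
Qed.

Lemma kahler_diag_in_coords n (N : form11 R n) : is_kahler N ->
  exists P (d : 'I_n -> R),
    [/\ P \in unitmx, omega_form R n = diag_in_coords P (fun _ => 1),
        N = diag_in_coords P (fun l => (d l)%:C%C) & forall l, 0 < d l].
Proof.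
move=> kN; have [Q [e [QU eN epos]]] :=
  hermitian_posdefmx_spectral (kahler_hermitian kN) (kahler_posdefmx kN).
have eE l : e 0 l = (complex.Re (e 0 l))%:C%C.
  by case: (e 0 l) (epos l) => a b /andP[/eqP /= ->].
have PT : (map_mx Num.conj Q)^T = Q^t* by rewrite map_trmx.
exists (map_mx Num.conj Q), (fun l => complex.Re (e 0 l)); split.
- by rewrite map_unitmx unitarymx_unit.
- by rewrite diag_in_coords1 PT trmxCK unitary_tCmul.
- rewrite diag_in_coordsE PT trmxCK eN; congr (_ *m diag_mx _ *m _).
  by apply/rowP => l; rewrite !mxE -eE.
- by move=> l; rewrite -ltcR -eE.
Qed.

Lemma kahler_sub_omega_diag n (N : form11 R n) :
  is_kahler N -> \tr N = n%:R ->
  exists P (b : 'I_n -> R),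
    [/\ P \in unitmx, omega_form R n = diag_in_coords P (fun _ => 1),
        N - omega_form R n = diag_in_coords P (fun l => (b l)%:C%C),
        \sum_l b l = 0 & forall l, -1 < b l].
Proof.
move=> /kahler_diag_in_coords [P [d [Pu omegaP NP dpos]]] trN.
exists P, (fun l => d l - 1); split => //.
- rewrite {1}omegaP NP diag_in_coordsB.
  by apply: eq_diag_in_coords => l; rewrite rmorphB.
- apply: (@complexI R); rewrite rmorph_sum /=.
  under eq_bigr => l _ do rewrite rmorphB rmorph1.
  rewrite sumrB -(mxtrace_diag_in_coords _ omegaP) -NP trN.
  by rewrite sumr_const card_ord subrr.
- by move=> l; rewrite ltrBrDr addNr.
Qed.

Lemma griffiths_congr_trace_delta n k (M : formmx R n k) (i0 : 'I_k) :
  (0 < n)%N -> val i0 = 0%N -> griffiths_positive M ->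
  M i0 i0 = omega_form R n ->
  exists C, [/\ C \in unitmx, congr_formmx C M i0 i0 = omega_form R n &
                forall i j, \tr (congr_formmx C M i j) = n%:R * (i == j)%:R].
Proof.
move=> n_gt0 hi0 hM hM00; have nR_gt0 : 0 < n%:R :> R[i] by rewrite ltr0n.
pose T := n%:R^-1 *: tracemx M.
have TH : T^t* = T.
  rewrite /T linearZ /= map_mxZ /= fmorphV rmorph_nat tracemx_hermitian //.
  by case: hM.
have TP : posdefmx T.
  by apply/posdefmxZ/griffiths_tracemx_posdefmx; rewrite ?invr_gt0.
have [C [Cu CTC Crow]] := hermitian_posdefmx_congr1 hi0 TH TP.
have trC i j : \tr (congr_formmx C M i j) = n%:R * (i == j)%:R.
  have : C *m tracemx M *m C^t* = n%:R *: 1%:M.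
    by rewrite -CTC /T -scalemxAr -scalemxAl scalerKV ?gt_eqF.
  by rewrite tr_congr_formmx => ->; rewrite !mxE.
exists C; split => //.
(* the (i0, i0) entry is |C i0 i0|^2 omega, and its trace is n *)
have c00 : C i0 i0 * (C i0 i0)^* = 1.
  have := trC i0 i0; rewrite congr_formmx_diag (formmx_eval_delta _ Crow).
  rewrite mxtraceZ hM00 mxtrace1 eqxx mulr1 -[RHS]mul1r.
  exact/mulIf/lt0r_neq0.
by rewrite congr_formmx_diag (formmx_eval_delta _ Crow) c00 scale1r.
Qed.

End FormMatrices.

Local Open Scope complex_scope.

Theorem mainTheorem4 (R : realType) (n k : nat) (hk : (2 <= k)%N)
  (M : formmx R n k)
  (hM : griffiths_positive M)
  (h11 : forall i : 'I_k, val i = 0%N -> M i i = omega_form R n) :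
  exists (C : 'M[R[i]]_k) (rho : 'I_k -> 'I_k -> form11 R n)
         (P : 'M[R[i]]_n) (b : 'I_n -> R),
    [/\ C \in unitmx,
        (forall i j : 'I_k,
           congr_formmx C M i j =
             (if i == j then omega_form R n else 0) +
             (if (i <= j)%N then rho i j else form_conj (rho j i))),
        (forall i : 'I_k, val i = 0%N -> rho i i = 0),
        (forall i j : 'I_k, (i <= j)%N -> is_primitive (rho i j)) &
        [/\ P \in unitmx,
            omega_form R n = diag_in_coords P (fun _ => 1),
            (forall i : 'I_k, val i = 1%N ->
               rho i i = diag_in_coords P (fun l => (b l)%:C)),
            \sum_(l < n) b l = 0 &
            (forall l : 'I_n, -1 < b l)]].
Proof.
have [n0|n_gt0] := posnP n.
  subst n; exists 1%:M, (fun _ _ => 0), 1%:M, (fun _ => 0).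
  split; [exact: unitmx1 | by move=> *; apply/matrixP => -[] | by [] | | ].
  - by move=> i j _; rewrite /is_primitive /wedge_omega_top mxtrace0 mulr0.
  - by split; rewrite ?unitmx1 ?big_ord0 ?ltrN10 //; move=> *; apply/matrixP => -[].
pose i0 : 'I_k := Ordinal (ltnW hk); pose i1 : 'I_k := Ordinal hk.
have [C [Cu C00 trC]] :=
  griffiths_congr_trace_delta n_gt0 (erefl : val i0 = 0%N) hM (h11 i0 erefl).
have trN : \tr (congr_formmx C M i1 i1) = n%:R by rewrite trC eqxx mulr1.
have [P [b [Pu omegaP N1 sumb bgt]]] :=
  kahler_sub_omega_diag (griffiths_congr_kahler i1 Cu hM) trN.
pose rho i j := congr_formmx C M i j - (if i == j then omega_form R n else 0).
exists C, rho, P, b; split => //.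
- move=> i j; rewrite /rho; case: leqP => [_|ji]; first by rewrite addrC subrK.
  have ij : (i == j) = false by apply/eqP => ij; rewrite ij ltnn in ji.
  by rewrite ij eq_sym ij add0r subr0 -congr_formmx_hermitian //; case: hM.
- move=> i hi; have -> : i = i0 by exact: val_inj.
  by rewrite /rho eqxx C00 subrr.
- move=> i j _; rewrite /is_primitive /wedge_omega_top raddfB /= trC.
  by case: eqP; rewrite /omega_form ?mxtrace1 ?mxtrace0 ?mulr1 ?mulr0 subrr mulr0.
- split => // i hi; have -> : i = i1 by exact: val_inj.
  by rewrite /rho eqxx.
Qed.
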